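(* Let $q$ be a prime power and let $\mathcal{F}=(\mathcal{F}_1,\ldots,\mathcal{F}_r)$ be a flag on $\mathbb{F}_{q^n}$. Then $\mathrm{Stab}^+(\mathcal{F})$ is the best friend of $\mathcal{F}$ and it contains every friend $\mathbb{F}_{q^m}$ of $\mathcal{F}$. Moreover, if $1\in\mathcal{F}_1$, then $\mathbb{F}_{q^m}\subseteq\mathrm{Stab}^+(\mathcal{F})\subseteq\mathcal{F}_1$ for every friend $\mathbb{F}_{q^m}$ of $\mathcal{F}$.
   Context: A flag on $\mathbb{F}_{q^n}$ is a sequence $(\mathcal{F}_1,\ldots,\mathcal{F}_r)$ of $\mathbb{F}_q$-subspaces with $\{0\}\subsetneq\mathcal{F}_1\subsetneq\cdots\subsetneq\mathcal{F}_r\subsetneq\mathbb{F}_{q^n}$. For $\gamma\in\mathbb{F}_{q^n}^*$, $\mathcal{F}\gamma=(\mathcal{F}_1\gamma,\ldots,\mathcal{F}_r\gamma)$ with $\mathcal{U}\gamma=\{u\gamma:u\in\mathcal{U}\}$; $\mathrm{Stab}(\mathcal{F})=\{\gamma\in\mathbb{F}_{q^n}^*:\mathcal{F}\gamma=\mathcal{F}\}$, and $\mathrm{Stab}^+(\mathcal{F})$ is the smallest subfield of $\mathbb{F}_{q^n}$ containing $\mathbb{F}_q$ and $\mathrm{Stab}(\mathcal{F})$. A subfield $\mathbb{F}_{q^m}$ of $\mathbb{F}_{q^n}$ is a friend of $\mathcal{F}$ if every $\mathcal{F}_i$ is a vector space over $\mathbb{F}_{q^m}$; the best friend of $\mathcal{F}$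 is its largest friend. *)

From HB Require Import structures.
From mathcomp Require Import all_boot all_order all_algebra all_field.
Set Implicit Arguments. Unset Strict Implicit. Unset Printing Implicit Defensive.
Import GRing.Theory.
Local Open Scope ring_scope.
Local Open Scope vspace_scope.

(* Setting: F = F_q a finite field, L = F_{q^n} a finite-dimensional field
   extension of F.  {vspace L} = F-subspaces of L; {subfield L} = subfields of L
   containing F. *)

Section FlagDefs.
Variables (F : finFieldType) (L : fieldExtType F).

Definition vsmul (U : {vspace L}) (g : L) : {vspace L} := (U * <[g]>)%VS.

Definition vsproper (U V : {vspace L}) : bool := (U <= V)%VS && (U != V).

Definition is_flag (Fl : seq {vspace L}) : Prop :=
  [/\ (0 < size Fl)%N,
      (forall i, (i < (size Fl).-1)%N ->
         vsproper (nth 0%VS Fl i) (nth 0%VS Fl i.+1)),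
      nth 0%VS Fl 0 != 0%VS &
      vsproper (last 0%VS Fl) fullv].

Definition in_stab (Fl : seq {vspace L}) (g : L) : bool :=
  (g != 0%R) && all (fun U => vsmul U g == U) Fl.

Definition stab (Fl : seq {vspace L}) : {set finvect_type L} :=
  [set g : finvect_type L | in_stab Fl g].

Definition stab_plus (Fl : seq {vspace L}) : {subfield L} :=
  <<1 & (enum (stab Fl) : seq L)>>%VS.

(* K is a friend of F: every F_i is a K-vector space *)
Definition friend (Fl : seq {vspace L}) (K : {subfield L}) : Prop :=
  forall U, U \in Fl -> (K * U <= U)%VS.

Definition best_friend (Fl : seq {vspace L}) (K : {subfield L}) : Prop :=
  friend Fl K /\ forall K' : {subfield L}, friend Fl K' -> (\dim K' <= \dim K)%N.

End FlagDefs.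

From HB Require Import structures.
From mathcomp Require Import all_boot all_order all_algebra all_field.
Import GRing.Theory.
Local Open Scope ring_scope.

(* The F_q-algebra generated by the elements x with x U <= U still maps U into
   U, so Stab^+ is a friend.  Conversely every nonzero element k of a friend
   maps each F_i into itself injectively, hence onto since F_i is finite
   dimensional, so k lies in Stab; thus every friend is inside Stab^+, which is
   therefore the largest friend.  If 1 lies in F_1, then Stab^+ = Stab^+ * 1 is
   contained in Stab^+ * F_1 <= F_1. *)

Section ProductStability.
Variables (F : fieldType) (L : fieldExtType F).
Local Open Scope vspace_scope.

Lemma span_prodv_subl (s : seq L) (U : {vspace L}) :
  {in s, forall x, <[x]> * U <= U} -> <<s>> * U <= U.
Proof.
elim: s => [|x s IHs] sU; first by rewrite span_nil prod0v sub0v.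
rewrite span_cons prodvDl subv_add sU ?mem_head //= IHs // => y ys.
by rewrite sU // inE ys orbT.
Qed.

Lemma prodv_line_eq (U : {vspace L}) (g : L) :
  g != 0%R -> <[g]> * U <= U -> <[g]> * U = U.
Proof.
move=> nz_g gU_U; apply/eqP; rewrite eqEdim gU_U /=.
rewrite prodvC -limg_amulr limg_dim_eq //.
by rewrite (eqP (lker0_amulr (u := g) _)) ?capv0 // unitfE.
Qed.

Lemma subv_of_prodv_subl (K U : {vspace L}) :
  1%R \in U -> K * U <= U -> K <= U.
Proof.
by move=> U1 KU_U; rewrite (subv_trans _ KU_U) // -{1}(prodv1 K) prodvSr -?memvE.
Qed.

End ProductStability.

Section StabPlus.
Variables (F : finFieldType) (L : fieldExtType F) (Fl : seq {vspace L}).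
Local Open Scope vspace_scope.

Lemma stab_plus_friend : friend Fl (stab_plus Fl).
Proof.
move=> U FlU; apply: agenv_modl.
rewrite prodvDl subv_add prod1v subvv /=; apply: span_prodv_subl => x.
rewrite (mem_enum (stab Fl) (x : finvect_type L)) inE.
case/andP=> _ /allP /(_ U FlU) /eqP.
by rewrite /vsmul prodvC => ->.
Qed.

Lemma friend_subv_stab_plus (K : {subfield L}) :
  friend Fl K -> K <= stab_plus Fl.
Proof.
move=> friendK; apply/subvP => k Kk.
have [->|nz_k] := eqVneq k 0%R; first exact: mem0v.
apply: seqv_sub_adjoin; rewrite (mem_enum (stab Fl) (k : finvect_type L)).
rewrite inE /in_stab nz_k; apply/allP => U FlU.
by rewrite /vsmul prodvC prodv_line_eq // (subv_trans _ (friendK U FlU))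
  // prodvSl // -memvE.
Qed.

Lemma stab_plus_best_friend : best_friend Fl (stab_plus Fl).
Proof.
by split=> [|K /friend_subv_stab_plus /dimvS]; first exact: stab_plus_friend.
Qed.

Lemma stab_plus_subv_head :
  (0 < size Fl)%N -> 1%R \in head 0 Fl -> stab_plus Fl <= head 0 Fl.
Proof.
move=> Fl_gt0 head1; apply: subv_of_prodv_subl head1 _.
by apply: stab_plus_friend; rewrite -nth0 mem_nth.
Qed.

End StabPlus.

Theorem proposition3p16 (F : finFieldType) (L : fieldExtType F)
    (Fl : seq {vspace L}) :
  is_flag Fl ->
  [/\ best_friend Fl (stab_plus Fl),
      (forall K : {subfield L}, friend Fl K -> (K <= stab_plus Fl)%VS) &
      (1 \in head 0%VS Fl ->
        forall K : {subfield L}, friend Fl K ->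
          (K <= stab_plus Fl)%VS /\ (stab_plus Fl <= head 0%VS Fl)%VS)].
Proof.
case=> Fl_gt0 _ _ _; split.
- exact: stab_plus_best_friend.
- exact: friend_subv_stab_plus.
- move=> head1 K friendK; split; first exact: friend_subv_stab_plus.
  exact: stab_plus_subv_head.
Qed.
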